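(* Let $G=(L\cup R,E)$ be a bipartite graph in which every node of $L$ has degree 2, and let $d_{c,\max}$ be the maximum degree of nodes in $R$. Let $k\ge 2$ be an integer and let $\mathcal{S}\subset L$ be such that the induced subgraph $G(\mathcal{S})$ is a tree whose longest path has length $2k-2$. Then \[|\mathcal{S}|\le \sum_{i=0}^{k-2}(d_{c,\max}-1)^{\lfloor (i+1)/2\rfloor}.\]
   Context: For $\mathcal{S}\subset L$, $\Gamma(\mathcal{S})$ is the set of neighbors of $\mathcal{S}$ in $R$, and the induced subgraph $G(\mathcal{S})$ has node set $\mathcal{S}\cup\Gamma(\mathcal{S})$ and all edges of $G$ between $\mathcal{S}$ and $\Gamma(\mathcal{S})$. The length of a path is its number of edges. *)

From mathcomp Require Import all_boot.
Set Implicit Arguments. Unset Strict Implicit. Unset Printing Implicit Defensive.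

(* Bipartite graph G = (L ∪ R, E) given by adj : L -> R -> bool
   (adj l r <=> {l,r} ∈ E). Vertices of G are L + R. *)
Section Bip.
Variables (L R : finType) (adj : L -> R -> bool).

Definition degL (l : L) : nat := #|[set r | adj l r]|.
Definition degR (r : R) : nat := #|[set l | adj l r]|.

Definition dcmax : nat := \max_(r : R) degR r.

Definition nbhd (S : {set L}) : {set R} := [set r | [exists l in S, adj l r]].

Definition indV (S : {set L}) : {set L + R} :=
  [set u | match u with inl l => l \in S | inr r => r \in nbhd S end].

Definition indE (S : {set L}) : rel (L + R) := fun u v =>
  match u, v with
  | inl l, inr r => (l \in S) && adj l r
  | inr r, inl l => (l \in S) && adj l r
  | _, _ => false
  end.

(* a (simple) path of G(S): distinct vertices x :: p, consecutive ones adjacent;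
   its length (number of edges) is size p *)
Definition is_path (S : {set L}) (x : L + R) (p : seq (L + R)) : bool :=
  path (indE S) x p && uniq (x :: p).

Definition connectedG (S : {set L}) : Prop :=
  forall u v, u \in indV S -> v \in indV S -> connect (indE S) u v.

Definition acyclicG (S : {set L}) : Prop :=
  forall x p, is_path S x p -> 2 <= size p -> ~~ indE S (last x p) x.

Definition is_tree (S : {set L}) : Prop :=
  indV S != set0 /\ connectedG S /\ acyclicG S.

Definition longest_path_len (S : {set L}) (n : nat) : Prop :=
  (exists x p, is_path S x p /\ size p = n) /\
  (forall x p, is_path S x p -> size p <= n).

End Bip.

(* Let [x0 :: p] be a longest path of G(S), of length 2k - 2.  Its end x0 lies
   in R: a node of L has two neighbours, and the one off the path would either
   close a cycle or extend the path.  So the centre c of the path, at distance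
   k - 1 from both ends, lies in L iff k - 1 is odd, and since the path is
   longest every node of the tree is within distance k - 1 of c.  In the
   breadth-first layers around c a node of L has at most one child and a node of
   R at most d_{c,max} - 1, so the layers grow by a factor at most d_{c,max} - 1
   every two steps; summing these bounds over the layers of L within distance
   k - 1 of c gives the claimed sum. *)

From mathcomp Require Import all_boot zify.
Set Implicit Arguments. Unset Strict Implicit. Unset Printing Implicit Defensive.

Lemma card_bigcup_le (I T : finType) (P : pred I) (F : I -> {set T}) :
  #|\bigcup_(i | P i) F i| <= \sum_(i | P i) #|F i|.
Proof.
elim/big_rec2: _ => [|i m A _ h]; first by rewrite cards0.
by rewrite cardsU (leq_trans (leq_subr _ _)) // leq_add2l.
Qed.

(* For [m = 0] the inner range is [0 <= i < 1], as [0.-1 = 0]. *)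
Lemma sum_alternate_pairs (f : nat -> nat) (b : bool) r :
  \sum_(0 <= m < r.+1) (b (+) odd m) * \sum_(m.-1 <= i < m.+1) f i =
  \sum_(0 <= i < r) f i + (b (+) odd r) * f r.
Proof.
elim: r => [|r IH]; first by rewrite big_nat1 /= big_nat1 big_geq.
rewrite big_nat_recr //= IH (big_nat_recl r.+1 r) // big_nat1 big_nat_recr //=.
by rewrite addbN; case: (b (+) odd r) => /=; lia.
Qed.

Section SymmetricGraph.
Variables (T : finType) (e : rel T).

Fixpoint ball (c : T) (n : nat) : {set T} :=
  if n is m.+1 then ball c m :|: [set w | [exists u in ball c m, e u w]]
  else [set c].

Lemma ballP c n v :
  reflect (exists q, [/\ path e c q, last c q = v & size q <= n]) (v \in ball c n).
Proof.
elim: n v => [|n IH] v /=.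
  rewrite inE; apply: (iffP eqP) => [->|[q [_ <-]]]; first by exists [::].
  by rewrite leqn0 => /nilP ->.
rewrite !inE; apply: (iffP orP) => [[/IH [q [hq hv hs]] | /existsP [u]]|[q]].
- by exists q; split; rewrite ?leqW.
- case/andP=> /IH [q [hq <- hs]] huv.
  by exists (rcons q v); rewrite rcons_path last_rcons size_rcons hq huv.
case: (leqP (size q) n) => hn [hq hv hs]; first by left; apply/IH; exists q.
right; case/lastP: q hq hv hs hn => [//|q w].
rewrite rcons_path last_rcons size_rcons ltnS => /andP [hq hw] <- hs _.
by apply/existsP; exists (last c q); rewrite hw andbT; apply/IH; exists q.
Qed.

Lemma ball_mono c m n : m <= n -> ball c m \subset ball c n.
Proof.
move=> mn; apply/subsetP => v /ballP [q [hq hv hs]].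
by apply/ballP; exists q; split; rewrite ?(leq_trans hs).
Qed.

Lemma ball_trans c u v m n : u \in ball c m -> v \in ball u n -> v \in ball c (m + n).
Proof.
move=> /ballP [q [hq <- hs]] /ballP [q' [hq' <- hs']]; apply/ballP.
by exists (q ++ q'); rewrite cat_path last_cat size_cat hq hq' leq_add.
Qed.

Lemma path_take_ball x p i j : path e x p -> i <= j ->
  last x (take j p) \in ball (last x (take i p)) (j - i).
Proof.
move=> hp ij; apply/ballP; exists (take (j - i) (drop i p)); split.
- by apply: take_path; move: hp; rewrite -{1}(cat_take_drop i p) cat_path => /andP [].
- by rewrite -last_cat -takeD subnKC.
- by rewrite size_take_min geq_minl.
Qed.

Lemma path_first_entry (A : pred T) v w : path e v w -> uniq (v :: w) -> A (last v w) ->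
  exists q, [/\ path e v q, uniq (v :: q), A (last v q), {subset q <= w} &
     forall z, z \in v :: q -> A z -> z = last v q].
Proof.
elim: w v => [|b w IH] v /=.
  by move=> _ _ Av; exists [::]; split=> // z; rewrite inE => /eqP ->.
case/andP=> evb hp /andP [vw hu] hl.
case Av: (A v).
  by exists [::]; split=> // z; rewrite inE => /eqP ->.
have [q [hq huq hAq hqw hfirst]] := IH b hp hu hl.
exists (b :: q); split=> //=.
- by rewrite evb.
- apply/andP; split; last exact: huq.
  by apply: contra vw; rewrite !inE => /predU1P [-> | /hqw ->]; rewrite ?eqxx ?orbT.
- by move=> z; rewrite !inE => /predU1P [-> | /hqw ->]; rewrite ?eqxx ?orbT.
- by move=> z; rewrite inE => /predU1P [-> | /hfirst //]; rewrite Av.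
Qed.

Lemma uniq_cat_first_entry (A : pred T) v q r :
  uniq (v :: q) -> uniq (last v q :: r) -> all A r ->
  (forall z, z \in v :: q -> A z -> z = last v q) -> uniq (v :: q ++ r).
Proof.
move=> huq; rewrite cons_uniq => /andP [yr hur] /allP hA hfirst.
rewrite -cat_cons cat_uniq huq hur andbT.
apply/hasPn => z hz; apply: contra yr => hzq.
by rewrite -(hfirst z hzq (hA z hz)).
Qed.

Hypothesis e_sym : symmetric e.

Lemma ball_sym c v n : v \in ball c n -> c \in ball v n.
Proof.
case/ballP=> q [hq <- hs]; apply/ballP; exists (rev (belast c q)); split.
- by rewrite rev_path (@eq_path _ _ e) // => x y; rewrite e_sym.
- by case: q {hq hs} => [|b q] //=; rewrite rev_cons last_rcons.
- by rewrite size_rev size_belast.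
Qed.

(* Let q be a simple path from v meeting the longest path only at its end y.
   The detours v ~ y ~ x0 and v ~ y ~ (end of p) are simple paths, hence no
   longer than p; this bounds the distance from v to the centre by h. *)
Lemma longest_path_center x0 p h v :
  path e x0 p -> uniq (x0 :: p) -> size p = h.*2 ->
  (forall x q, path e x q -> uniq (x :: q) -> size q <= size p) ->
  connect e v x0 -> v \in ball (last x0 (take h p)) h.
Proof.
move=> hp hu hsz hmax /connectP [w hw hwx0].
have : last v w \in x0 :: p by rewrite -hwx0 mem_head.
case: (shortenP hw) => w' hw' huw' _ hx0.
have [q [hq huq hy _ hfirst]] := path_first_entry hw' huw' hx0.
case/splitPl: hy hp hu hsz hmax hfirst => p1 p2 hy hp hu hsz hmax hfirst.
have [hp1 hp2] : path e x0 p1 /\ path e (last v q) p2 by apply/andP; rewrite -hy -cat_path.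
have hu1 : uniq (x0 :: p1) by move: hu; rewrite -cat_cons cat_uniq => /andP [].
have hu2 : uniq (last v q :: p2).
  by move: hu; rewrite -cat_cons lastI cat_rcons cat_uniq hy => /and3P [].
have on_path z : z \in x0 :: p1 -> z \in x0 :: p1 ++ p2.
  by rewrite -cat_cons mem_cat => ->.
have to_start : size q + size p1 <= size (p1 ++ p2).
  rewrite -(size_belast x0 p1) -(size_rev (belast x0 p1)) -size_cat; apply: (hmax v).
    by rewrite cat_path hq /= -hy rev_path (@eq_path _ _ e) // => a b; rewrite e_sym.
  apply: uniq_cat_first_entry hfirst => //.
    by rewrite -hy -rev_rcons -lastI rev_uniq.
  by apply/allP => z; rewrite mem_rev => /mem_belast /on_path.
have to_end : size q + size p2 <= size (p1 ++ p2).
  rewrite -size_cat; apply: (hmax v); first by rewrite cat_path hq.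
  apply: uniq_cat_first_entry hfirst => //.
  apply/allP => z hz; change (z \in x0 :: p1 ++ p2).
  by rewrite inE mem_cat hz !orbT.
have hvy : v \in ball (last v q) (size q) by apply: ball_sym; apply/ballP; exists q.
have hyp : last v q = last x0 (take (size p1) (p1 ++ p2)) by rewrite take_size_cat.
rewrite size_cat in hsz to_start to_end.
suff [d hcy hd] : exists2 d, last v q \in ball (last x0 (take h (p1 ++ p2))) d & d + size q <= h.
  by apply: (subsetP (ball_mono _ hd)); apply: ball_trans hcy hvy.
rewrite -muln2 in hsz.
case: (leqP (size p1) h) => hh.
- exists (h - size p1); last by clear -hh hsz to_end; lia.
  by apply: ball_sym; rewrite hyp; apply: path_take_ball.
- exists (size p1 - h); last by clear -hh hsz to_start; lia.
  by rewrite hyp; apply: path_take_ball => //; exact: ltnW.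
Qed.

Lemma longest_path_start_nb x0 p z :
  irreflexive e ->
  (forall x q, path e x q -> uniq (x :: q) -> 1 < size q -> ~~ e (last x q) x) ->
  path e x0 p -> uniq (x0 :: p) ->
  (forall x q, path e x q -> uniq (x :: q) -> size q <= size p) ->
  e x0 z -> z = head x0 p.
Proof.
move=> e_irr acyclic hp hu hmax hz.
case: (boolP (z \in x0 :: p)) => [/predU1P [zx0 | zp] | hnew].
- by rewrite zx0 e_irr in hz.
- case/splitPr: zp hp hu => [[|b p1] p2] hp hu //.
  suff : ~~ e (last x0 (rcons (b :: p1) z)) x0 by rewrite last_rcons e_sym hz.
  apply: acyclic; last by rewrite size_rcons.
  + by move: hp; rewrite -cat_rcons cat_path => /andP [].
  + by move: hu; rewrite -cat_rcons -cat_cons cat_uniq => /andP [].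
- by have := hmax z (x0 :: p); rewrite /= ltnn e_sym hz hp hnew => /(_ isT hu).
Qed.

Definition nb (u : T) : {set T} := [set w | e u w].

Definition layer c n : {set T} := if n is m.+1 then ball c n :\: ball c m else [set c].

Lemma ball_step c n u w : u \in ball c n -> e u w -> w \in ball c n.+1.
Proof.
move=> hu huw; rewrite /= !inE; apply/orP; right.
by apply/existsP; exists u; apply/andP.
Qed.

Lemma layer_sub c n : layer c n.+1 \subset \bigcup_(u in layer c n) (nb u :\: ball c n).
Proof.
apply/subsetP => w; rewrite /layer inE => /andP [wn].
rewrite /= inE (negbTE wn) /= inE => /existsP [u /andP [hu huw]].
apply/bigcupP; exists u; last by rewrite !inE wn.
case: n wn hu => [//|m] wn hu.
by rewrite inE hu andbT; apply: contra wn => /ball_step; apply.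
Qed.

Lemma layer_parent c n u : 0 < n -> u \in layer c n -> exists2 z, z \in ball c n & e u z.
Proof.
case: n => [//|m] _; rewrite inE => /andP [um].
rewrite /= inE (negbTE um) /= inE => /existsP [z /andP [hz hzu]].
by exists z; [rewrite inE hz | rewrite e_sym].
Qed.

(* Beyond the root, each node of a layer has a neighbour (its parent) inside the ball. *)
Lemma card_layerS_sum c n :
  #|layer c n.+1| <= \sum_(u in layer c n) (#|nb u| - (0 < n)).
Proof.
apply: leq_trans (subset_leq_card (layer_sub c n)) _.
apply: leq_trans (card_bigcup_le _ _) _; apply: leq_sum => u hu.
have [-> | n_gt0] := posnP n; first by rewrite subn0 subset_leq_card ?subsetDl.
have [z hz huz] := layer_parent n_gt0 hu.
have sub_nb : nb u :\: ball c n \subset nb u :\ z.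
  by apply/subsetP => w; rewrite !inE => /andP [wn ->]; rewrite andbT; apply: contraNneq wn => ->.
apply: leq_trans (subset_leq_card sub_nb) _.
by rewrite (cardsD1 z (nb u)) inE huz addKn.
Qed.

Section Bipartition.
Variables (side : T -> bool) (D : nat).
Hypothesis e_side : forall u w, e u w -> side w = ~~ side u.

Lemma path_side a s : path e a s -> side (last a s) = side a (+) odd (size s).
Proof.
elim: s a => [|b s IH] a /=; first by rewrite addbF.
by case/andP => /e_side hb /IH ->; rewrite hb addNb addbN.
Qed.

Lemma layer_side c n u : u \in layer c n -> side u = side c (+) odd n.
Proof.
elim: n u => [|n IH] u; first by rewrite inE => /eqP ->; rewrite addbF.
move/(subsetP (layer_sub c n)) => /bigcupP [z hz]; rewrite !inE => /andP [_ /e_side ->].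
by rewrite (IH z hz) /= addbN.
Qed.

Lemma card_layer_side c m :
  #|[set u in layer c m | side u]| <= (side c (+) odd m) * #|layer c m|.
Proof.
case hm: (side c (+) odd m).
  by rewrite mul1n; apply/subset_leq_card/subsetP => u; rewrite inE => /andP [].
rewrite mul0n leqn0 cards_eq0; apply/eqP/setP => u; rewrite !inE.
by case hu: (u \in layer c m); rewrite //= (layer_side hu) hm.
Qed.

Lemma card_ball_side_sum c r :
  #|[set u in ball c r | side u]| <= \sum_(0 <= m < r.+1) (side c (+) odd m) * #|layer c m|.
Proof.
elim: r => [|r IH]; first by rewrite big_nat1; exact: card_layer_side c 0.
have split_ball : [set u in ball c r.+1 | side u] \subset
    [set u in ball c r | side u] :|: [set u in layer c r.+1 | side u].
  apply/subsetP => u /setIdP [hu su]; apply/setUP.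
  by case: (boolP (u \in ball c r)) => ur; [left | right]; apply/setIdP; split => //; apply/setDP.
apply: leq_trans (subset_leq_card split_ball) _; apply: leq_trans (leq_card_setU _ _) _.
by rewrite big_nat_recr //=; exact: leq_add IH (card_layer_side c r.+1).
Qed.

Hypothesis card_nb_side : forall u, #|nb u| <= if side u then 2 else D.

Lemma card_layerS c n :
  #|layer c n.+1| <= #|layer c n| * ((if side c (+) odd n then 2 else D) - (0 < n)).
Proof.
apply: leq_trans (card_layerS_sum c n) _; rewrite -sum_nat_const.
by apply: leq_sum => u hu; rewrite leq_sub2r // -(layer_side hu) card_nb_side.
Qed.

(* Consecutive layers lie on opposite sides: the growth factors are [2 - 1] and [D - 1]. *)
Lemma card_layerSS c n : 0 < n -> #|layer c n.+2| <= #|layer c n| * (D - 1).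
Proof.
move=> n_gt0; apply: leq_trans (card_layerS c n.+1) _.
apply: leq_trans (leq_mul (card_layerS c n) (leqnn _)) _.
rewrite n_gt0 -mulnA leq_mul2l /= addbN.
by case: (side c (+) odd n) => /=; rewrite ?subnn ?mul1n ?muln1 leqnn orbT.
Qed.

Lemma card_layer_le c m : side c (+) odd m ->
  #|layer c m| <= \sum_(m.-1 <= i < m.+1) (D - 1) ^ uphalf i.
Proof.
elim/ltn_ind: m => -[|[|[|m]]] IH hm.
- by rewrite cards1 (big_nat1 _ 0).
- have c_right : side c = false by move: hm; rewrite /= addbT => /negbTE.
  apply: leq_trans (card_layerS c 0) _.
  rewrite /= addbF c_right cards1 big_nat_recl // big_nat1 /=; lia.
- have c_left : side c by move: hm; rewrite /= addbF.
  apply: leq_trans (card_layerS c 1) _; rewrite /= addbT c_left /=.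
  apply: leq_trans (leq_mul (card_layerS c 0) (leqnn _)) _.
  rewrite /= addbF c_left cards1 big_nat_recl // big_nat1 /=; lia.
- have hm' : side c (+) odd m.+1 by move: hm; rewrite /= negbK.
  have := IH m.+1 (leqnSn m.+2) hm'; rewrite (big_nat_recl m.+1 m) // big_nat1 => IHm.
  apply: leq_trans (card_layerSS c (ltn0Sn m)) _.
  rewrite (big_nat_recl m.+3 m.+2) // big_nat1 (expnS _ (uphalf m)) (expnS _ (uphalf m.+1)).
  by rewrite -mulnDr mulnC leq_mul2l IHm orbT.
Qed.

(* A layer [m] on the counted side is charged to the terms [m - 1] and [m] of the sum. *)
Lemma card_ball_side_le c r : side c = odd r ->
  #|[set u in ball c r | side u]| <= \sum_(0 <= i < r) (D - 1) ^ uphalf i.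
Proof.
move=> c_side; apply: leq_trans (card_ball_side_sum c r) _.
have -> : \sum_(0 <= i < r) (D - 1) ^ uphalf i =
    \sum_(0 <= m < r.+1) (side c (+) odd m) * \sum_(m.-1 <= i < m.+1) (D - 1) ^ uphalf i.
  by rewrite (sum_alternate_pairs (fun i => (D - 1) ^ uphalf i)) c_side addbb addn0.
apply: leq_sum => m _.
by case hm: (side c (+) odd m); rewrite ?mul1n ?mul0n ?card_layer_le.
Qed.

End Bipartition.

End SymmetricGraph.

Section InducedSubgraph.
Variables (L R : finType) (adj : L -> R -> bool) (S : {set L}).
Local Notation e := (indE adj S).

Definition is_left (u : L + R) : bool := if u is inl _ then true else false.

Lemma indE_sym : symmetric e.
Proof. by case=> a; case. Qed.

Lemma indE_irr : irreflexive e.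
Proof. by case. Qed.

Lemma indE_side u w : e u w -> is_left w = ~~ is_left u.
Proof. by case: u; case: w. Qed.

Lemma indE_indV u w : e u w -> u \in indV adj S.
Proof.
case: u => [l|r]; case: w => [l'|r'] //= /andP [h1 h2]; rewrite inE //.
by rewrite inE; apply/existsP; exists l'; rewrite h1.
Qed.

Lemma path_head_indV x p : path e x p -> 0 < size p -> x \in indV adj S.
Proof. by case: p => [//|y p] /andP [/indE_indV]. Qed.

Lemma nb_inl l : nb e (inl l) = inr @: [set r | (l \in S) && adj l r].
Proof.
apply/setP => -[l'|r]; rewrite inE /=; last by rewrite mem_imset ?inE //; exact: inr_inj.
by apply/esym/imsetP => -[].
Qed.

Lemma card_nb_le (hdeg : forall l : L, degL adj l = 2) u :
  #|nb e u| <= if is_left u then 2 else dcmax adj.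
Proof.
case: u => [l|r] /=.
  rewrite nb_inl (card_imset _ (@inr_inj L R)) -(hdeg l).
  by apply/subset_leq_card/subsetP => r; rewrite !inE => /andP [].
apply: leq_trans (leq_bigmax (F := degR adj) r).
rewrite /degR -(card_imset _ (@inl_inj L R)).
apply/subset_leq_card/subsetP => -[l|r']; rewrite !inE //= => /andP [_ h].
by rewrite mem_imset ?inE //; exact: inl_inj.
Qed.

Lemma longest_path_start_right (hdeg : forall l : L, degL adj l = 2) x0 p :
  acyclicG adj S -> is_path adj S x0 p -> 0 < size p ->
  (forall x q, is_path adj S x q -> size q <= size p) -> is_left x0 = false.
Proof.
move=> acyclic /andP [hp hu] p_gt0 hmax; case: x0 hp hu => [l|//] hp hu.
have head_only z : e (inl l) z -> z = head (inl l) p.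
  apply: (longest_path_start_nb indE_sym indE_irr _ hp hu).
  - by move=> x q hq huq; apply: acyclic; rewrite /is_path hq huq.
  - by move=> x q hq huq; apply: (hmax x); rewrite /is_path hq huq.
have lS : l \in S by have := path_head_indV hp p_gt0; rewrite inE.
have : #|nb e (inl l)| <= 1.
  rewrite -(cards1 (head (inl l) p)); apply/subset_leq_card/subsetP => z.
  by rewrite !inE => /head_only ->.
by rewrite nb_inl (card_imset _ (@inr_inj L R)) lS -[X in X <= 1]/(degL adj l) hdeg.
Qed.

End InducedSubgraph.

Theorem lemma8 (L R : finType) (adj : L -> R -> bool)
  (hdeg : forall l : L, degL adj l = 2)
  (k : nat) (hk : 2 <= k) (S : {set L})
  (htree : is_tree adj S)
  (hlong : longest_path_len adj S (2 * k - 2)) :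
  #|S| <= \sum_(0 <= i < k - 1) (dcmax adj - 1) ^ ((i + 1)./2).
Proof.
have [[x0 [p [hp p_size]]] hmax] := hlong.
have [_ [hconn hacyclic]] := htree.
have [hpath huniq] := andP hp.
have longest x q : is_path adj S x q -> size q <= size p by rewrite p_size; apply: hmax.
have p_gt0 : 0 < size p by rewrite p_size; lia.
set c := last x0 (take (k - 1) p).
have x0_right : is_left x0 = false := longest_path_start_right hdeg hacyclic hp p_gt0 longest.
have c_side : is_left c = odd (k - 1).
  rewrite (path_side (@indE_side _ _ adj S) (take_path _ hpath)) x0_right size_takel //.
  by rewrite p_size; lia.
have c_center v : v \in indV adj S -> v \in ball (indE adj S) c (k - 1).
  move=> hv; apply: (longest_path_center (indE_sym adj S) hpath huniq).
  - by rewrite p_size -muln2; lia.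
  - by move=> x q hq huq; apply: (longest x); rewrite /is_path hq huq.
  - exact: hconn hv (path_head_indV hpath p_gt0).
under eq_bigr do rewrite addn1 -uphalfE.
apply: leq_trans (card_ball_side_le (indE_sym adj S) (@indE_side _ _ adj S)
                                     (card_nb_le S hdeg) c_side).
rewrite -(card_imset S (@inl_inj L R)); apply/subset_leq_card/subsetP => _ /imsetP [l lS ->].
by rewrite inE c_center ?inE.
Qed.
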